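(* Let $n\geq 4$ and let $\pi\in S(\mathbb{Z}_n)$ satisfy $t([\pi])=n-2$. Then $\pi$ is a strong complete mapping, i.e. both $x\mapsto \pi(x)-x$ and $x\mapsto \pi(x)+x$ are permutations of $\mathbb{Z}_n$.
   Context: $S(\mathbb{Z}_n)$ is the set of bijections $\mathbb{Z}_n\to\mathbb{Z}_n$. For $\pi\in S(\mathbb{Z}_n)$, $\mathrm{cyc}(\pi)$ is the number of cycles (including fixed points) of $\pi$, $t(\pi)=n-\mathrm{cyc}(\pi)$, $[\pi]=\{x\mapsto \pi(x+b): b\in\mathbb{Z}_n\}$ and $t([\pi])=\min_{\sigma\in[\pi]}t(\sigma)$. *)

From HB Require Import structures.
From mathcomp Require Import all_boot all_order all_algebra all_fingroup.
Set Implicit Arguments. Unset Strict Implicit. Unset Printing Implicit Defensive.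
Import GRing.Theory.
Local Open Scope ring_scope.

(* Z_n is modelled by 'Z_n (valid for n >= 2; the theorem assumes n >= 4).
   S(Z_n) is {perm 'Z_n}. *)

Definition cyc (n : nat) (p : {perm 'Z_n}) : nat := #|porbits p|.

Definition tperm (n : nat) (p : {perm 'Z_n}) : nat := (n - cyc p)%N.

Definition transl (n : nat) (b : 'Z_n) : {perm 'Z_n} := perm (@addIr _ b).

Definition shiftp (n : nat) (p : {perm 'Z_n}) (b : 'Z_n) : {perm 'Z_n} :=
  (transl b * p)%g.

Lemma shiftpE n (p : {perm 'Z_n}) b x : shiftp p b x = p (x + b).
Proof. by rewrite /shiftp permM /transl permE. Qed.

(* t([pi]) = min over b of t(x |-> pi(x+b)); the default value n of the
   iterated min is harmless since tperm _ <= n always. *)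
Definition tclass (n : nat) (p : {perm 'Z_n}) : nat :=
  \big[minn/n]_(b : 'Z_n) tperm (shiftp p b).

From Pilot Require Import Defs.
From HB Require Import structures.
From mathcomp Require Import all_boot all_order all_algebra all_fingroup.
From mathcomp Require Import zify.
Set Implicit Arguments. Unset Strict Implicit. Unset Printing Implicit Defensive.
Import Order.TTheory GRing.Theory.
Local Open Scope ring_scope.

(* As t([pi]) = n - 2, every shift x |-> pi(x + b) has at most two cycles.
   If pi(x) - x took the same value at x <> y, a suitable shift of pi would
   fix both pi(x) and pi(y); if pi(x) + x did, a suitable shift would swap
   pi(x) and pi(y) while, the difference map being a bijection by the first
   case, also fixing some third point.  Either way, since n >= 4, a further
   point lies outside these invariant sets, giving a third cycle. *)

Section ThreeCycles.

Variables (T : finType) (s : {perm T}).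

Lemma porbit_sub_closed (A : {set T}) x :
  x \in A -> {in A, forall y, s y \in A} -> porbit s x \subset A.
Proof.
move=> Ax sA; apply/subsetP => _ /porbitP[i ->].
elim: i => [|i IHi]; first by rewrite expg0 perm1.
by rewrite expgSr permM sA.
Qed.

Lemma fixed_set1_closed x : s x = x -> {in [set x], forall y, s y \in [set x]}.
Proof. by move=> sx _ /set1P ->; rewrite sx set11. Qed.

Lemma three_porbits (A B : {set T}) a b :
    {in A, forall y, s y \in A} -> {in B, forall y, s y \in B} ->
    a \in A -> b \in B -> b \notin A -> (#|A| + #|B| < #|T|)%N ->
  (2 < #|porbits s|)%N.
Proof.
move=> sA sB Aa Bb bA card_AB.
have [d]: exists d, d \notin A :|: B.
  apply/existsP; rewrite -negb_forall; apply: contraL card_AB => /forallP AB_full.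
  rewrite -leqNgt; apply: leq_trans (leq_card_setU A B).
  by apply/subset_leq_card/subsetP => d _; apply: AB_full.
rewrite in_setU negb_or => /andP[dA dB].
have notin_orbit (C : {set T}) x y : {in C, forall z, s z \in C} -> x \in C ->
    y \notin C -> y \notin porbit s x.
  by move=> sC Cx; apply: contra => /(subsetP (porbit_sub_closed Cx sC)).
apply/card_gt2P; exists (porbit s a), (porbit s d), (porbit s b).
split; first by split; apply: imset_f.
rewrite ![_ == porbit s _]eq_porbit_mem [a \in _]porbit_sym.
by split; [exact: (notin_orbit A) | exact: (notin_orbit B) | exact: (notin_orbit A)].
Qed.

End ThreeCycles.

Section ShiftClass.

Variables (n : nat) (p : {perm 'Z_n}).

Lemma tclass_le_tperm b : (tclass p <= Defs.tperm (shiftp p b))%N.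
Proof. by rewrite /tclass -minEnat -leEnat; exact: bigmin_le. Qed.

Lemma shiftp_fixE b x : (shiftp p b (p x) == p x) = (p x - x == - b).
Proof. by rewrite shiftpE (inj_eq perm_inj) -subr_eq0 -[RHS]subr_eq0 opprK addrAC. Qed.

End ShiftClass.

Section StrongCompleteMapping.

Variables (n : nat) (p : {perm 'Z_n}).
Hypotheses (n_ge4 : (4 <= n)%N) (tp : tclass p = (n - 2)%N).

Let card_Zn : #|'Z_n| = n.
Proof. by rewrite card_ord Zp_cast //; lia. Qed.

Lemma porbits_shiftp_le2 b : (#|porbits (shiftp p b)| <= 2)%N.
Proof. by have := tclass_le_tperm p b; rewrite tp /Defs.tperm /cyc; lia. Qed.

Lemma perm_subr_inj : injective (fun x => p x - x).
Proof.
move=> x y /= eq_xy; apply/eqP/contraT => neq_xy.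
set b := x - p x.
have fix_p z : p z - z = p x - x -> shiftp p b (p z) = p z.
  by move=> ez; apply/eqP; rewrite shiftp_fixE ez opprB.
suff : (2 < #|porbits (shiftp p b)|)%N by rewrite ltnNge porbits_shiftp_le2.
apply: (three_porbits (fixed_set1_closed (fix_p x erefl))
                      (fixed_set1_closed (fix_p y (esym eq_xy)))).
- exact: set11.
- exact: set11.
- by rewrite inE (inj_eq perm_inj) eq_sym.
- by rewrite !cards1 card_Zn; lia.
Qed.

Lemma perm_addr_inj : injective (fun x => p x + x).
Proof.
move=> x y /= eq_xy; apply/eqP/contraT => neq_xy.
set b := y - p x.
have swap_x : shiftp p b (p x) = p y by rewrite shiftpE addrC subrK.
have swap_y : shiftp p b (p y) = p x.
  by rewrite shiftpE addrA -eq_xy addrAC subrr add0r.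
have /codomP[w eq_w] : - b \in codom (fun x => p x - x).
  by apply: inj_card_onto; first exact: perm_subr_inj.
have fix_w : shiftp p b (p w) = p w by apply/eqP; rewrite shiftp_fixE eq_w.
suff : (2 < #|porbits (shiftp p b)|)%N by rewrite ltnNge porbits_shiftp_le2.
apply: (three_porbits (fixed_set1_closed fix_w) (B := [set p x; p y])).
- by move=> _ /set2P[]->; rewrite !inE ?swap_x ?swap_y eqxx ?orbT.
- exact: set11.
- exact: set21.
- apply/set1P => pxw; move: swap_x; rewrite pxw fix_w -pxw => /perm_inj xy.
  by rewrite xy eqxx in neq_xy.
- by rewrite cards1 cards2 card_Zn; case: (_ != _); lia.
Qed.

End StrongCompleteMapping.

Theorem proposition2p6 (n : nat) (p : {perm 'Z_n}) :
  (4 <= n)%N -> tclass p = (n - 2)%N ->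
  injective (fun x : 'Z_n => p x - x) /\ injective (fun x : 'Z_n => p x + x).
Proof. by move=> n_ge4 tp; split; [exact: perm_subr_inj | exact: perm_addr_inj]. Qed.
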